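(* Let $\mathcal C$ be an EACP over $\mathbb R$ with natural basis $\{h_1,\dots,h_n,r\}$ and matrix of structural constants $M=A\oplus\mathbf b$, and suppose $\operatorname{rank}A=n$. Then every evolution subalgebra $\mathcal C_1$ of $\mathcal C$ is of the form $\mathcal C_1=\operatorname{span}\{f_1,\dots,f_m,ar\}$ for some $0\le m\le n$, $a\in\{0,1\}$ and vectors $f_i=\sum_{j=1}^n\alpha_{ij}h_j$ with $\alpha_{ij}\in\mathbb R$, $i=1,\dots,m$.
   Context: An EACP over a field $K$ is a $K$-algebra with a basis $\{h_1,\dots,h_n,r\}$ (natural basis) such that $h_ir=rh_i=\sum_{j=1}^n a_{ij}h_j+b_ir$, $h_ih_j=0$ for all $i,j$, and $rr=0$; its matrix of structural constants is $M=A\oplus\mathbf b$ with $A=(a_{ij})_{i,j=1}^n$, $\mathbf b=(b_1,\dots,b_n)^T$. An evolution subalgebra of $\mathcal C$ is a linear subspace $\mathcal C_1$ which itself has a basis $\{h'_1,\dots,h'_k,r'\}$ with a multiplication table of the same form, i.e. $h'_ih'_j=0$, $r'r'=0$, and $h'_ir'=r'h'_i=\sum_j a'_{ij}h'_j+b'_ir'$ for some scalars $a'_{ij},b'_i$. *)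

From HB Require Import structures.
From mathcomp Require Import all_boot all_order all_algebra.
From mathcomp Require Import reals.
Set Implicit Arguments. Unset Strict Implicit. Unset Printing Implicit Defensive.
Import Order.TTheory GRing.Theory Num.Theory.
Local Open Scope ring_scope.

(* Elements of the EACP C are coordinate row vectors in 'rV[R]_(n+1) w.r.t. the
   natural basis {h_1,...,h_n, r}: coordinate [lshift 1 j] is h_j, coordinate
   [rshift n ord0] is r. *)

Definition hvec (R : realType) (n : nat) (j : 'I_n) : 'rV[R]_(n + 1) :=
  delta_mx 0 (lshift 1 j).

Definition rvec (R : realType) (n : nat) : 'rV[R]_(n + 1) :=
  delta_mx 0 (rshift n (ord0 : 'I_1)).

(* Multiplication table of the natural basis: M = A (+) b = row_mx A b,
   h_i r = r h_i = sum_j a_ij h_j + b_i r  (= row i of M), h_i h_j = 0, r r = 0. *)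
Definition eacp_table (R : realType) (n : nat) (A : 'M[R]_n) (b : 'cV[R]_n)
    (p q : 'I_(n + 1)) : 'rV[R]_(n + 1) :=
  match split p, split q with
  | inl i, inr _ => row i (row_mx A b)
  | inr _, inl i => row i (row_mx A b)
  | _, _ => 0
  end.

Definition eacp_mul (R : realType) (n : nat) (A : 'M[R]_n) (b : 'cV[R]_n)
    (x y : 'rV[R]_(n + 1)) : 'rV[R]_(n + 1) :=
  \sum_(p < n + 1) \sum_(q < n + 1) (x 0 p * y 0 q) *: eacp_table A b p q.

Definition is_evolution_subalgebra (R : realType) (n : nat) (A : 'M[R]_n)
    (b : 'cV[R]_n) (C1 : {vspace 'rV[R]_(n + 1)}) : Prop :=
  exists (k : nat) (hp : 'I_k -> 'rV[R]_(n + 1)) (rp : 'rV[R]_(n + 1))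
         (A' : 'M[R]_k) (b' : 'cV[R]_k),
    [/\ basis_of C1 (rcons [seq hp i | i <- enum 'I_k] rp),
        (forall i j, eacp_mul A b (hp i) (hp j) = 0),
        eacp_mul A b rp rp = 0,
        (forall i, eacp_mul A b (hp i) rp = \sum_(j < k) A' i j *: hp j + b' i 0 *: rp)
      & (forall i, eacp_mul A b rp (hp i) = \sum_(j < k) A' i j *: hp j + b' i 0 *: rp)].

From HB Require Import structures.
From mathcomp Require Import all_boot all_order all_algebra.
From mathcomp Require Import reals.
Set Implicit Arguments. Unset Strict Implicit. Unset Printing Implicit Defensive.
Import Order.TTheory GRing.Theory Num.Theory.
Local Open Scope ring_scope.

(* Since A is invertible, x x = 2 x_r (x_1, ..., x_n) M vanishes only if x
   lies in span{h_j} (x_r = 0) or on the line R r.  Each basis vector of an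
   evolution subalgebra squares to zero, so the basis splits into vectors of
   span{h_j} (linearly independent, hence at most n of them) and nonzero
   multiples of r, which together span either R r or 0. *)

Lemma span_nonzero_multiples (K : fieldType) (vT : vectType K) (v : vT)
    (X : seq vT) :
  (forall x, x \in X -> exists2 c, c != 0 & x = c *: v) ->
  <<X>>%VS = <[(X != [::])%:R *: v]>%VS.
Proof.
case: X => [|x0 X] multX.
  by rewrite span_nil scale0r; apply/esym/eqP; rewrite -dimv_eq0 dim_vline eqxx.
rewrite scale1r; apply/eqP; rewrite eqEsubv; apply/andP; split.
  by apply/span_subvP => x /multX [c _ ->]; rewrite memvZ ?memv_line.
have [c nz_c x0E] := multX x0 (mem_head _ _).
rewrite -memvE (_ : v = c^-1 *: x0); last by rewrite x0E scalerA mulVf ?scale1r.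
by rewrite memvZ ?memv_span ?mem_head.
Qed.

Definition rcoord (R : realType) (n : nat) (x : 'rV[R]_(n + 1)) : R :=
  x 0 (rshift n ord0).

Section Coordinates.
Variables (R : realType) (n : nat).
Implicit Types x : 'rV[R]_(n + 1).

Lemma lshift_neq_rshift (i : 'I_n) (j : 'I_1) : (lshift 1 i == rshift n j) = false.
Proof. by apply/negbTE; rewrite -val_eqE /= neq_ltn ltn_addr. Qed.

Lemma rcoord_eq0E x :
  rcoord x = 0 -> x = \sum_(j < n) x 0 (lshift 1 j) *: hvec R j.
Proof.
move=> xr0; apply/rowP => k; rewrite summxE; case: (splitP k) => j kE.
  have -> : k = lshift 1 j by apply: val_inj.
  rewrite (bigD1 j) //= big1 ?addr0 => [|i /negbTE neq_ij]; rewrite !mxE.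
    by rewrite !eqxx mulr1.
  by rewrite (inj_eq (@lshift_inj _ _)) eq_sym neq_ij andbF mulr0.
have -> : k = rshift n j by apply: val_inj.
rewrite ord1 [LHS]xr0 big1 // => i _.
by rewrite !mxE eq_sym lshift_neq_rshift andbF mulr0.
Qed.

Lemma lsubmx_eq0E x : lsubmx x = 0 -> x = rcoord x *: rvec R n.
Proof.
move=> xl0; apply/rowP => k; rewrite !mxE; case: (splitP k) => j kE.
  have -> : k = lshift 1 j by apply: val_inj.
  rewrite lshift_neq_rshift andbF mulr0.
  by have := congr1 (fun M : 'rV[R]_n => M 0 j) xl0; rewrite !mxE.
have -> : k = rshift n j by apply: val_inj.
by rewrite ord1 !eqxx mulr1.
Qed.

Lemma hvec_comb (s : seq 'rV[R]_(n + 1)) :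
  (forall x, x \in s -> rcoord x = 0) ->
  exists alpha : 'M[R]_(size s, n),
    [seq \sum_(j < n) alpha i j *: hvec R j | i <- enum 'I_(size s)] = s.
Proof.
move=> s_r0; exists (\matrix_(i, j) s`_i 0 (lshift 1 j)).
rewrite -[RHS](take_size s) -(map_nth_iota0 0) // -val_enum_ord -map_comp.
apply: eq_map => i /=; rewrite [RHS]rcoord_eq0E ?s_r0 ?mem_nth //.
by apply: eq_bigr => j _; rewrite mxE.
Qed.

Lemma size_free_rcoord0 (X : seq 'rV[R]_(n + 1)) :
  free X -> (forall x, x \in X -> rcoord x = 0) -> (size X <= n)%N.
Proof.
move=> freeX X_r0; rewrite -(eqP freeX).
pose H := <<[seq hvec R j | j <- enum 'I_n]>>%VS.
have /dimvS/leq_trans -> // : (<<X>> <= H)%VS.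
  apply/span_subvP => x /X_r0/rcoord_eq0E ->; apply: memv_suml => j _.
  by rewrite memvZ // memv_span // map_f ?mem_enum.
by rewrite (leq_trans (dim_span _)) // size_map size_enum_ord.
Qed.

End Coordinates.

Section Multiplication.
Variables (R : realType) (n : nat) (A : 'M[R]_n) (b : 'cV[R]_n).

Lemma eacp_table_hh i j : eacp_table A b (lshift 1 i) (lshift 1 j) = 0.
Proof. by rewrite /eacp_table (unsplitK (inl _ i)) (unsplitK (inl _ j)). Qed.

Lemma eacp_table_hr i j : eacp_table A b (lshift 1 i) (rshift n j) = row i (row_mx A b).
Proof. by rewrite /eacp_table (unsplitK (inl _ i)) (unsplitK (inr _ j)). Qed.

Lemma eacp_table_rh i j : eacp_table A b (rshift n j) (lshift 1 i) = row i (row_mx A b).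
Proof. by rewrite /eacp_table (unsplitK (inl _ i)) (unsplitK (inr _ j)). Qed.

Lemma eacp_table_rr i j : eacp_table A b (rshift n i) (rshift n j) = 0.
Proof. by rewrite /eacp_table (unsplitK (inr _ i)) (unsplitK (inr _ j)). Qed.

Lemma eacp_mulE x y :
  eacp_mul A b x y = (rcoord y *: lsubmx x + rcoord x *: lsubmx y) *m row_mx A b.
Proof.
rewrite /eacp_mul big_split_ord /= big_ord1.
under eq_bigr do rewrite big_split_ord /= big_ord1.
rewrite big_split_ord /= big_ord1.
under eq_bigr do rewrite eacp_table_hr.
under eq_bigr do under eq_bigr do rewrite eacp_table_hh scaler0.
under eq_bigr do rewrite big1_eq add0r.
under [X in _ + (X + _)]eq_bigr do rewrite eacp_table_rh.
rewrite eacp_table_rr scaler0 addr0.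
rewrite mulmxDl -!scalemxAl !mulmx_sum_row !scaler_sumr.
by congr (_ + _); apply: eq_bigr => i _; rewrite scalerA !mxE // mulrC.
Qed.

Lemma eacp_sqr_eq0 x : A \in unitmx ->
  eacp_mul A b x x = 0 -> rcoord x = 0 \/ x = rcoord x *: rvec R n.
Proof.
move=> unitA; rewrite eacp_mulE mul_mx_row -scalerDl.
move=> /eqP; rewrite row_mx_eq0 => /andP[/eqP xxA0 _].
have /eqP : (rcoord x + rcoord x) *: lsubmx x = 0.
  by rewrite -[LHS](mulmxK unitA) xxA0 mul0mx.
rewrite scaler_eq0 => /orP[|/eqP /lsubmx_eq0E]; last by right.
by rewrite -mulr2n mulrn_eq0 /= => /eqP; left.
Qed.

End Multiplication.

Theorem proposition4p4 (R : realType) (n : nat) (A : 'M[R]_n) (b : 'cV[R]_n)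
    (C1 : {vspace 'rV[R]_(n + 1)}) :
  \rank A = n ->
  is_evolution_subalgebra A b C1 ->
  exists m : nat, (m <= n)%N /\
  exists a : R, (a = 0 \/ a = 1) /\
  exists alpha : 'M[R]_(m, n),
    C1 = <<rcons [seq (\sum_(j < n) alpha i j *: hvec R j)%R | i <- enum 'I_m]
                 (a *: rvec R n)%R>>%VS.
Proof.
move=> rankA [k [hp [rp [A' [b' [basisL hp_sqr rp_sqr _ _]]]]]].
set L := rcons _ rp in basisL.
have unitA : A \in unitmx by rewrite -row_free_unit /row_free rankA.
have L_sqr x : x \in L -> eacp_mul A b x x = 0.
  by rewrite mem_rcons in_cons => /orP[/eqP -> // | /mapP[i _ ->]].
pose P (x : 'rV[R]_(n + 1)) := rcoord x == 0.
have P_r0 x : x \in filter P L -> rcoord x = 0 by rewrite mem_filter => /andP[/eqP].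
have [alpha alphaE] := hvec_comb P_r0.
exists (size (filter P L)); split.
  exact: size_free_rcoord0 (filter_free _ (basis_free basisL)) P_r0.
exists (filter (predC P) L != [::])%:R; split; first by case: eqP; [left | right].
exists alpha; rewrite alphaE -(span_basis basisL) -cats1 span_cat span_seq1.
rewrite -span_nonzero_multiples => [|x]; last first.
  rewrite mem_filter => /andP[/negP x_r x_L]; exists (rcoord x); first exact/negP.
  by have [/eqP //|] := eacp_sqr_eq0 unitA (L_sqr x x_L).
by rewrite -span_cat; apply/eq_span/perm_mem; rewrite perm_sym perm_filterC.
Qed.
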